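(* Let $k$ be a field of characteristic $0$, let $n_0<n_1$ be positive integers with $\gcd(n_0,n_1)=1$, and let $S=\langle (0,n_1),(n_0,n_1-n_0),(n_1,0)\rangle\subseteq\mathbb{N}^2$. Let $S_1=\langle n_0,n_1\rangle$ and $S_2=\langle n_1-n_0,n_1\rangle$ be the projections of $S$ onto the first and second coordinates. Then: \begin{enumerate} \item If $S_1\neq\mathbb{N}$ and $S_2\neq\mathbb{N}$, then $\mathrm{Der}_k(k[S])$ is minimally generated by $\left\{ t\frac{\partial}{\partial t},\ t^{n_0(n_1-1)-n_1+1}u^{(n_1-1)(n_1-n_0)}\frac{\partial}{\partial t},\ u\frac{\partial}{\partial u},\ t^{n_0(n_1-1)}u^{(n_1-1)(n_1-n_0)-n_1+1}\frac{\partial}{\partial u}\right\}$. \item If $S_1=\mathbb{N}$ and $S_2\neq\mathbb{N}$, then $\mathrm{Der}_k(k[S])$ is minimally generated by $\left\{ t\frac{\partial}{\partial t},\ u^{1+(n_1-2)n_1}\frac{\partial}{\partial t},\ u\frac{\partial}{\partial u},\ t^{n_1-1}u^{(n_1-1)(n_1-2)}\frac{\partial}{\partial u}\right\}$. \item If $S_1\neq\mathbb{N}$ and $S_2=\mathbb{N}$, then $\mathrm{Der}_k(k[S])$ is minimally generated by $\left\{ t\frac{\partial}{\partial t},\ t^{n_0(n_1-1)-n_1+1}u^{n_1-1}\frac{\partial}{\partial t},\ u\frac{\partial}{\partial u},\ t^{n_0(n_1-1)}\frac{\partial}{\partial u}\right\}$. \item If $S_1=S_2=\mathbb{N}$, then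 $\mathrm{Der}_k(k[S])$ is minimally generated by $\left\{ t\frac{\partial}{\partial t},\ u\frac{\partial}{\partial t},\ u\frac{\partial}{\partial u},\ t\frac{\partial}{\partial u}\right\}$. \end{enumerate}
   Context: For an affine semigroup $S\subseteq\mathbb{N}^2$, the semigroup ring is $k[S]=\bigoplus_{(s_1,s_2)\in S}k\,t^{s_1}u^{s_2}\subseteq k[t,u]$, where $t,u$ are indeterminates (the first coordinate is the exponent of $t$, the second that of $u$). $\mathrm{Der}_k(k[S])$ is the $k[S]$-module of $k$-derivations of $k[S]$; every such derivation extends uniquely to the fraction field $k(t,u)$ and is written as $f\frac{\partial}{\partial t}+g\frac{\partial}{\partial u}$. ''Minimally generated'' refers to a minimal generating set of $\mathrm{Der}_k(k[S])$ as a $k[S]$-module. $\langle a_0,\dots,a_m\rangle$ denotes the set of $\mathbb{N}$-linear combinations of $a_0,\dots,a_m$. *)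

From HB Require Import structures.
From mathcomp Require Import all_boot all_order all_algebra.
From mathcomp Require Import mpoly.
Set Implicit Arguments. Unset Strict Implicit. Unset Printing Implicit Defensive.
Import Order.TTheory GRing.Theory.
Local Open Scope ring_scope.

Definition tvar : 'I_2 := ord0.
Definition uvar : 'I_2 := ord_max.

Definition mono (k : fieldType) (a b : nat) : {mpoly k[2]} :=
  'X_tvar ^+ a * 'X_uvar ^+ b.

Definition numSg (a b x : nat) : Prop := exists i j : nat, x = (i * a + j * b)%N.

(* S = <(0,n1),(n0,n1-n0),(n1,0)> in N^2 (first coord = exponent of t) *)
Definition inS (n0 n1 x y : nat) : Prop :=
  exists a b c : nat, x = (b * n0 + c * n1)%N /\ y = (a * n1 + b * (n1 - n0))%N.

Definition inkS (k : fieldType) (n0 n1 : nat) (p : {mpoly k[2]}) : Prop :=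
  forall m, m \in msupp p -> inS n0 n1 (m tvar) (m uvar).

(* a k-derivation of k[S], represented by a map on k[t,u] whose restriction
   to k[S] is the derivation (values outside k[S] are irrelevant) *)
Definition isDerkS (k : fieldType) (n0 n1 : nat) (D : {mpoly k[2]} -> {mpoly k[2]}) : Prop :=
  [/\ forall p, inkS n0 n1 p -> inkS n0 n1 (D p),
      forall (c : k) p q, inkS n0 n1 p -> inkS n0 n1 q -> D (c *: p + q) = c *: D p + D q
    & forall p q, inkS n0 n1 p -> inkS n0 n1 q -> D (p * q) = p * D q + q * D p].

Definition vf (k : fieldType) (fg : {mpoly k[2]} * {mpoly k[2]}) (h : {mpoly k[2]}) : {mpoly k[2]} :=
  fg.1 * mderiv tvar h + fg.2 * mderiv uvar h.

Definition inSpan (k : fieldType) (n0 n1 : nat) (m : nat)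
    (G : 'I_m -> {mpoly k[2]} * {mpoly k[2]}) (P : pred 'I_m)
    (D : {mpoly k[2]} -> {mpoly k[2]}) : Prop :=
  exists c : 'I_m -> {mpoly k[2]}, (forall i, inkS n0 n1 (c i)) /\
    forall h, inkS n0 n1 h -> D h = \sum_(i < m | P i) c i * vf (G i) h.

Definition minGenDer (k : fieldType) (n0 n1 : nat) (m : nat)
    (G : 'I_m -> {mpoly k[2]} * {mpoly k[2]}) : Prop :=
  [/\ forall i, isDerkS n0 n1 (vf (G i)),
      forall D, isDerkS n0 n1 D -> inSpan n0 n1 G predT D
    & forall j, ~ inSpan n0 n1 G (fun i => i != j) (vf (G j))].

Definition fam4 (k : fieldType) (a b c d : {mpoly k[2]} * {mpoly k[2]}) :
  'I_4 -> {mpoly k[2]} * {mpoly k[2]} := fun i => nth a [:: a; b; c; d] i.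

(* k[S] is generated by X = u^n1, Y = t^n0 u^(n1-n0) and Z = t^n1 subject to
   Y^n1 = X^(n1-n0) Z^n0, so a derivation D of k[S] is determined by DX, DY, DZ, and
   differentiating the relation gives n1 XZ DY = (n1-n0) YZ DX + n0 XY DZ.
   Put A = n0 (n1-1) and B = (n1-1)(n1-n0), so that t^A u^B = Y^(n1-1).  As n0 and n1
   are coprime, the b n0 with b < n1 are exactly the elements of <n0, n1> outside
   n1 + <n0, n1>; comparing supports in the relation then shows that every monomial of
   DZ lies in (n1, 0) + S or in (A, B) + S, and symmetrically every monomial of DX lies
   in (0, n1) + S or in (A, B) + S.  In characteristic 0 this writes D as a
   k[S]-combination of t d/dt, t^(A+1-n1) u^B d/dt, u d/du and t^A u^(B+1-n1) d/du,
   which are derivations of k[S].  None of them is redundant: a relation would put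
   (n1, 0) or (0, n1) into (A, B) + S, or (A - n1, B) or (A, B - n1) into S, and the
   latter two are excluded by the same property of <n0, n1> and <n1 - n0, n1>.
   The four cases of the statement specialise this family to n0 = 1 and/or n1 - n0 = 1. *)

From HB Require Import structures.
From mathcomp Require Import all_boot all_order all_algebra.
From mathcomp Require Import mpoly.
From mathcomp Require Import zify ring.

Set Implicit Arguments.
Unset Strict Implicit.
Unset Printing Implicit Defensive.

(* The b * a with b < n form the Apery set of <a, n> with respect to n. *)
Lemma numSg_shift_apery a n b x :
  coprime a n -> (b < n)%N -> numSg a n x -> (x + n)%N <> (b * a)%N.
Proof.
move=> co_an lt_bn [i [j ->]] E.
have E' : ((b - i) * a = j.+1 * n)%N by rewrite mulnBl; lia.
rewrite coprime_sym in co_an.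
have : (n %| b - i)%N by rewrite -(Gauss_dvdl _ co_an) E' dvdn_mull.
case: (posnP (b - i)) => [bi0 _ | /dvdn_leq le_nbi /le_nbi]; lia.
Qed.

Lemma numSg_inS_t n0 n1 x y : inS n0 n1 x y -> numSg n0 n1 x.
Proof. by case=> a [b [c [-> _]]]; exists b, c. Qed.

Lemma numSg_inS_u n0 n1 x y : inS n0 n1 x y -> numSg (n1 - n0) n1 y.
Proof. by case=> a [b [c [_ ->]]]; exists b, a; rewrite addnC. Qed.

Lemma inS_add n0 n1 x y x' y' :
  inS n0 n1 x y -> inS n0 n1 x' y' -> inS n0 n1 (x + x') (y + y').
Proof.
case=> a [b [c [-> ->]]] [a' [b' [c' [-> ->]]]].
by exists (a + a')%N, (b + b')%N, (c + c')%N; split; ring.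
Qed.

Lemma numSg_addl a b x : numSg a b x -> numSg a b (x + a).
Proof. by case=> i [j ->]; exists i.+1, j; ring. Qed.

Section SemigroupMembership.
Variables n0 n1 : nat.
Hypotheses (n0_gt0 : (0 < n0)%N) (n0_lt_n1 : (n0 < n1)%N) (co_n0n1 : coprime n0 n1).

Local Notation A := (n0 * (n1 - 1))%N.
Local Notation B := ((n1 - 1) * (n1 - n0))%N.

Lemma inS_reduced x y : inS n0 n1 x y ->
  exists a b c, [/\ (b < n1)%N, x = (b * n0 + c * n1)%N & y = (a * n1 + b * (n1 - n0))%N].
Proof.
case=> a [b [c [-> ->]]].
exists (a + b %/ n1 * (n1 - n0))%N, (b %% n1), (c + b %/ n1 * n0)%N.
rewrite ltn_pmod; last lia.
by split=> //; rewrite {1}(divn_eq b n1); ring.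
Qed.

(* Stability of k[S] under t^(A+1-n1) u^B d/dt, on monomials. *)
Lemma inS_shift_t x y : inS n0 n1 x.+1 y -> inS n0 n1 (A + 1 - n1 + x) (B + y).
Proof.
case/inS_reduced=> a [b [c [_ ex ->]]].
have [s [d [e0 e1]]] : exists s d, n0 = s.+1 /\ n1 = (s + d).+2.
  by exists n0.-1, (n1 - n0).-1; lia.
have -> : (A + 1 - n1 = s * (s + d).+1)%N by rewrite e0 e1; nia.
have -> : B = ((s + d).+1 * d.+1)%N by rewrite e0 e1; nia.
rewrite e0 e1 in ex *.
case: c ex => [|c] ex.
- case: b ex => [|b] ex; first lia.
  exists (a + d.+1)%N, b, s; split; nia.
- exists a, (b + (s + d).+1)%N, c; split; nia.
Qed.

(* The support analysis of DZ, carried out on t-exponents. *)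
Lemma inS_split_t x y : inS n0 n1 x y ->
  (exists2 z, numSg n0 n1 z & (x + n0 = z + n1)%N) ->
  (exists2 x', inS n0 n1 x' y & x = (x' + n1)%N) \/
  (exists x' y', [/\ inS n0 n1 x' y', x = (x' + A)%N & y = (y' + B)%N]).
Proof.
case/inS_reduced=> a [b [c [lt_bn -> ->]]] [z S1z Ez].
case: c Ez => [|c] Ez; last by left; exists (b * n0 + c * n1)%N; [exists a, b, c | lia].
have [eb|lt_b1n] : b = (n1 - 1)%N \/ (b.+1 < n1)%N by lia.
- right; exists 0%N, (a * n1)%N; rewrite eb.
  by split; [exists a, 0%N, 0%N; split | |]; ring.
- by exfalso; apply: (numSg_shift_apery co_n0n1 lt_b1n S1z); lia.
Qed.

End SemigroupMembership.

Lemma inS_swap n0 n1 x y : (n0 <= n1)%N -> inS (n1 - n0) n1 y x <-> inS n0 n1 x y.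
Proof.
move=> le_n0n1; rewrite /inS subKn //.
by split=> [[a [b [c [-> ->]]]] | [a [b [c [-> ->]]]]]; exists c, b, a; split; ring.
Qed.

Lemma coprime_subl n0 n1 : (n0 <= n1)%N -> coprime (n1 - n0) n1 = coprime n0 n1.
Proof.
move=> le_n0n1; have [d ->] : exists d, n1 = (n0 + d)%N by exists (n1 - n0); lia.
by rewrite addKn /coprime gcdnDr gcdnDl gcdnC.
Qed.

Section SemigroupSymmetry.
Variables n0 n1 : nat.
Hypotheses (n0_gt0 : (0 < n0)%N) (n0_lt_n1 : (n0 < n1)%N) (co_n0n1 : coprime n0 n1).

Local Notation A := (n0 * (n1 - 1))%N.
Local Notation B := ((n1 - 1) * (n1 - n0))%N.

Let n1n0_gt0 : (0 < n1 - n0)%N. Proof. lia. Qed.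
Let n1n0_lt_n1 : (n1 - n0 < n1)%N. Proof. lia. Qed.
Let co_n1n0 : coprime (n1 - n0) n1. Proof. by rewrite coprime_subl // ltnW. Qed.
Let n1_sub_n1n0 : (n1 - (n1 - n0))%N = n0. Proof. lia. Qed.

Let swapS x y : inS (n1 - n0) n1 y x <-> inS n0 n1 x y.
Proof. exact: inS_swap (ltnW n0_lt_n1). Qed.

Lemma inS_shift_u x y : inS n0 n1 x y.+1 -> inS n0 n1 (A + x) (B + 1 - n1 + y).
Proof.
rewrite -swapS -swapS => /(inS_shift_t n1n0_gt0 n1n0_lt_n1 co_n1n0).
by rewrite n1_sub_n1n0 mulnC [(n1 - 1) * n0]mulnC.
Qed.

Lemma inS_split_u x y : inS n0 n1 x y ->
  (exists2 z, numSg (n1 - n0) n1 z & (y + (n1 - n0) = z + n1)%N) ->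
  (exists2 y', inS n0 n1 x y' & y = (y' + n1)%N) \/
  (exists x' y', [/\ inS n0 n1 x' y', x = (x' + A)%N & y = (y' + B)%N]).
Proof.
rewrite -swapS => Sxy /(inS_split_t n1n0_gt0 n1n0_lt_n1 co_n1n0 Sxy).
case=> [[y' Sy' ->] | [y' [x' [Sy'x' -> ->]]]].
- by left; exists y'; rewrite -?swapS.
- right; exists x', y'; split; first by rewrite -swapS.
    by rewrite n1_sub_n1n0 mulnC.
  by rewrite mulnC.
Qed.

End SemigroupSymmetry.

Import GRing.Theory.
Local Open Scope ring_scope.

Section MpolySupport.
Variables (n : nat) (R : nzRingType).
Implicit Types (p : {mpoly R[n]}) (m e : 'X_{1..n}).

Lemma msupp_ind (M : 'X_{1..n} -> Prop) (Q : {mpoly R[n]} -> Prop) :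
  Q 0 ->
  (forall c m p, M m -> {in msupp p, forall m', M m'} -> Q p -> Q (c *: 'X_[m] + p)) ->
  forall p, {in msupp p, forall m, M m} -> Q p.
Proof.
move=> Q0 QS; elim/mpolyind=> // c m p m_notin_p c_nz IHp Mcmp.
have coef m' : (c *: 'X_[m] + p)@_m' = c * (m == m')%:R + p@_m'.
  by rewrite mcoeffD mcoeffZ mcoeffX.
have Mp : {in msupp p, forall m', M m'}.
  move=> m' m'_p; apply: Mcmp; rewrite mcoeff_msupp coef.
  have /negbTE -> : m != m' by apply: contraNneq m_notin_p => ->.
  by rewrite mulr0 add0r -mcoeff_msupp.
apply: QS => //; last exact: IHp.
apply: Mcmp; rewrite mcoeff_msupp coef eqxx mulr1.
by move: m_notin_p; rewrite mcoeff_msupp negbK => /eqP ->; rewrite addr0.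
Qed.

Lemma msuppMX_mem p e m :
  m \in msupp (p * 'X_[e]) -> exists2 m', m' \in msupp p & m = (m' + e)%MM.
Proof.
by rewrite (perm_mem (msuppMX _ _)) => /mapP [m' m'_p ->]; exists m'; rewrite // addmC.
Qed.

Lemma mpolyX_neq0 m : 'X_[m] != 0 :> {mpoly R[n]}.
Proof.
apply/eqP => /(congr1 (mcoeff m)).
by rewrite mcoeffX eqxx mcoeff0 => /eqP; rewrite oner_eq0.
Qed.

End MpolySupport.

Definition mnm2 (a b : nat) : 'X_{1..2} := [multinom if i == tvar then a else b | i < 2].

Lemma mnm2_t a b : mnm2 a b tvar = a.
Proof. by rewrite mnmE. Qed.

Lemma mnm2_u a b : mnm2 a b uvar = b.
Proof. by rewrite mnmE. Qed.

Lemma ord2_tu (i : 'I_2) : i = tvar \/ i = uvar.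
Proof. by case: i => [[|[|//]] lt_i2]; [left | right]; apply: val_inj. Qed.

Lemma mnm2_eta (m : 'X_{1..2}) : m = mnm2 (m tvar) (m uvar).
Proof. by apply/mnmP => i; case: (ord2_tu i) => ->; rewrite ?mnm2_t ?mnm2_u. Qed.

Lemma mnm2D a b c d : (mnm2 a b + mnm2 c d)%MM = mnm2 (a + c) (b + d).
Proof. by apply/mnmP => i; case: (ord2_tu i) => ->; rewrite mnmDE ?mnm2_t ?mnm2_u. Qed.

Lemma mnm2Mn a b j : (mnm2 a b *+ j)%MM = mnm2 (a * j) (b * j).
Proof. by apply/mnmP => i; case: (ord2_tu i) => ->; rewrite mulmnE ?mnm2_t ?mnm2_u. Qed.

Lemma mnm2_sub_tvar a b : (mnm2 a b - U_(tvar))%MM = mnm2 a.-1 b.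
Proof.
by apply/mnmP => i; case: (ord2_tu i) => ->; rewrite mnmBE mnm1E ?mnm2_t ?mnm2_u ?subn1 ?subn0.
Qed.

Lemma mnm2_sub_uvar a b : (mnm2 a b - U_(uvar))%MM = mnm2 a b.-1.
Proof.
by apply/mnmP => i; case: (ord2_tu i) => ->; rewrite mnmBE mnm1E ?mnm2_t ?mnm2_u ?subn1 ?subn0.
Qed.

Section VectorFields.
Variable k : fieldType.
Local Notation P := {mpoly k[2]}.

Lemma mono_mnm2 a b : mono k a b = 'X_[mnm2 a b].
Proof.
rewrite /mono !mpolyXn -mpolyXD; congr 'X_[_]; apply/mnmP => i.
by case: (ord2_tu i) => ->; rewrite mnmDE !mulmnE !mnm1E ?mnm2_t ?mnm2_u /=; ring.
Qed.

Lemma mulX_mnm2 a b c d : 'X_[mnm2 a b] * 'X_[mnm2 c d] = 'X_[mnm2 (a + c) (b + d)] :> P.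
Proof. by rewrite -mpolyXD mnm2D. Qed.

Lemma expX_mnm2 a b j : 'X_[mnm2 a b] ^+ j = 'X_[mnm2 (a * j) (b * j)] :> P.
Proof. by rewrite mpolyXn mnm2Mn. Qed.

Lemma vf_mnm2 (f g : P) a b :
  vf (f, g) 'X_[mnm2 a b] = f * 'X_[mnm2 a.-1 b] *+ a + g * 'X_[mnm2 a b.-1] *+ b.
Proof.
by rewrite /vf /= !mderivX mnm2_t mnm2_u mnm2_sub_tvar mnm2_sub_uvar -!scalerAr !scaler_nat.
Qed.

Lemma vf_additive fg (c : k) (p q : P) : vf fg (c *: p + q) = c *: vf fg p + vf fg q.
Proof. by rewrite /vf !mderivD !mderivZ -!mul_mpolyC; ring. Qed.

Lemma vf_Leibniz fg (p q : P) : vf fg (p * q) = p * vf fg q + q * vf fg p.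
Proof. by rewrite /vf !mderivM; ring. Qed.

Lemma vf_sum (I : Type) (r : seq I) (Pr : pred I) (c : I -> P) (G : I -> P * P) h :
  \sum_(i <- r | Pr i) c i * vf (G i) h =
  vf (\sum_(i <- r | Pr i) c i * (G i).1, \sum_(i <- r | Pr i) c i * (G i).2) h.
Proof.
rewrite /vf /= !mulr_suml -big_split /=.
by apply: eq_bigr => i _; rewrite /vf; ring.
Qed.

End VectorFields.

Section SemigroupRing.
Variables (k : fieldType) (n0 n1 : nat).
Local Notation P := {mpoly k[2]}.
Local Notation inkS := (@inkS k n0 n1).
Local Notation inSm m := (inS n0 n1 (m tvar) (m uvar)).
Local Notation X := ('X_[mnm2 0 n1] : P).
Local Notation Y := ('X_[mnm2 n0 (n1 - n0)] : P).
Local Notation Z := ('X_[mnm2 n1 0] : P).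
Implicit Types (p q h : P) (m e f : 'X_{1..2}).

Lemma inkS0 : inkS 0.
Proof. by move=> m; rewrite msupp0. Qed.

Lemma inkSD p q : inkS p -> inkS q -> inkS (p + q).
Proof. by move=> Sp Sq m /msuppD_le; rewrite mem_cat => /orP[/Sp | /Sq]. Qed.

Lemma inkSZ (c : k) p : inkS p -> inkS (c *: p).
Proof. by move=> Sp m /msuppZ_le /Sp. Qed.

Lemma inkSMn p j : inkS p -> inkS (p *+ j).
Proof. by rewrite -scaler_nat; apply: inkSZ. Qed.

Lemma inkSM p q : inkS p -> inkS q -> inkS (p * q).
Proof.
move=> Sp Sq m /msuppM_le /allpairsP [[m1 m2] [/= /Sp S1 /Sq S2 ->]].
by rewrite !mnmDE; apply: inS_add.
Qed.

Lemma inkSX m : inSm m -> inkS 'X_[m].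
Proof. by move=> Sm m'; rewrite msuppX mem_seq1 => /eqP ->. Qed.

Lemma inkS1 : inkS 1.
Proof. by rewrite -mpolyX0; apply: inkSX; exists 0%N, 0%N, 0%N; rewrite !mnm0E. Qed.

Lemma inkSXn p j : inkS p -> inkS (p ^+ j).
Proof. by move=> Sp; elim: j => [|j IHj]; [exact: inkS1 | rewrite exprS; apply: inkSM]. Qed.

Lemma inkSX_mnm2 a b : inS n0 n1 a b -> inkS 'X_[mnm2 a b].
Proof. by move=> Sab; apply: inkSX; rewrite mnm2_t mnm2_u. Qed.

Lemma inkS_X : inkS X.
Proof. by apply: inkSX_mnm2; exists 1%N, 0%N, 0%N; split; ring. Qed.

Lemma inkS_Y : inkS Y.
Proof. by apply: inkSX_mnm2; exists 0%N, 1%N, 0%N; split; ring. Qed.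

Lemma inkS_Z : inkS Z.
Proof. by apply: inkSX_mnm2; exists 0%N, 0%N, 1%N; split; ring. Qed.

Lemma mpolyX_inS m : inSm m -> exists a b c, 'X_[m] = X ^+ a * Y ^+ b * Z ^+ c.
Proof.
case=> a [b [c [Em_t Em_u]]]; exists a, b, c.
by rewrite !expX_mnm2 !mulX_mnm2 [m]mnm2_eta Em_t Em_u; congr 'X_[mnm2 _ _]; ring.
Qed.

(* [isDerkS] without stability of k[S], so that every [vf fg] qualifies. *)
Definition derivation_on (D : P -> P) : Prop :=
  (forall (c : k) p q, inkS p -> inkS q -> D (c *: p + q) = c *: D p + D q) /\
  (forall p q, inkS p -> inkS q -> D (p * q) = p * D q + q * D p).

Lemma isDerkS_derivation_on D : isDerkS n0 n1 D -> derivation_on D.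
Proof. by case. Qed.

Lemma vf_derivation_on fg : derivation_on (vf fg).
Proof. by split=> *; [apply: vf_additive | apply: vf_Leibniz]. Qed.

Lemma isDerkS_vf fg : (forall m, inSm m -> inkS (vf fg 'X_[m])) -> isDerkS n0 n1 (vf fg).
Proof.
move=> vfX; split=> [|*|*]; [| exact: vf_additive | exact: vf_Leibniz].
apply: (@msupp_ind 2 k (fun m => inSm m)) => [|c m p Sm Sp Svfp].
  by rewrite /vf !mderiv0 !mulr0 addr0; apply: inkS0.
by rewrite vf_additive; apply: inkSD => //; apply/inkSZ/vfX.
Qed.

Section Derivation.
Variable D : P -> P.
Hypothesis derD : derivation_on D.

Lemma derivation0 : D 0 = 0.
Proof. by have := derD.2 0 0 inkS0 inkS0; rewrite mulr0 !mul0r addr0. Qed.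

Lemma derivation1 : D 1 = 0.
Proof.
have := derD.2 1 1 inkS1 inkS1; rewrite mulr1 mul1r.
by move/(congr1 (fun q => q - D 1)); rewrite subrr addrK.
Qed.

Lemma derivation_exp p j : inkS p -> p * D (p ^+ j) = p ^+ j * D p *+ j.
Proof.
move=> Sp; elim: j => [|j IHj]; first by rewrite derivation1 mulr0.
rewrite exprSr derD.2 //; last exact: inkSXn.
by rewrite mulrDr IHj; ring.
Qed.

(* Differentiate [Y ^+ n1 = X ^+ (n1 - n0) * Z ^+ n0], multiply by XYZ, cancel [Y ^+ n1]. *)
Lemma derivation_relation :
  D Y * (X * Z) *+ n1 = D X * (Y * Z) *+ (n1 - n0) + D Z * (X * Y) *+ n0.
Proof.
have YXZ : Y ^+ n1 = X ^+ (n1 - n0) * Z ^+ n0.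
  by rewrite !expX_mnm2 mulX_mnm2; congr 'X_[mnm2 _ _]; ring.
have DXZ := derD.2 _ _ (inkSXn (j := n1 - n0) inkS_X) (inkSXn (j := n0) inkS_Z).
apply: (mulfI (expf_neq0 n1 (mpolyX_neq0 _ _))).
transitivity (X * Z * (Y * D (Y ^+ n1))); first by rewrite (derivation_exp _ inkS_Y); ring.
rewrite YXZ DXZ.
transitivity (Y * X ^+ (n1 - n0) * X * (Z * D (Z ^+ n0)) +
              Y * Z ^+ n0 * Z * (X * D (X ^+ (n1 - n0)))); first ring.
by rewrite (derivation_exp _ inkS_X) (derivation_exp _ inkS_Z); ring.
Qed.

End Derivation.

Lemma derivation_on_eq D D' : derivation_on D -> derivation_on D' ->
  D X = D' X -> D Y = D' Y -> D Z = D' Z -> forall h, inkS h -> D h = D' h.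
Proof.
move=> derD derD' eqX eqY eqZ.
pose agree p := inkS p /\ D p = D' p.
have agreeM p q : agree p -> agree q -> agree (p * q).
  by move=> [Sp eqp] [Sq eqq]; split; [exact: inkSM | rewrite derD.2 // derD'.2 // eqp eqq].
have agreeXn p j : agree p -> agree (p ^+ j).
  move=> Ap; elim: j => [|j IHj]; last by rewrite exprS; apply: agreeM.
  by split; [exact: inkS1 | rewrite !expr0 !derivation1].
have agree_mono m : inSm m -> D 'X_[m] = D' 'X_[m].
  case/mpolyX_inS=> a [b [c ->]].
  have [AX AY AZ] : [/\ agree X, agree Y & agree Z].
    by split; split=> //; [exact: inkS_X | exact: inkS_Y | exact: inkS_Z].
  by case: (agreeM _ _ (agreeM _ _ (agreeXn _ a AX) (agreeXn _ b AY)) (agreeXn _ c AZ)).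
apply: (@msupp_ind 2 k (fun m => inSm m)) => [|c m p Sm Sp IHp]; first by rewrite !derivation0.
by rewrite derD.1 ?derD'.1 ?agree_mono ?IHp //; apply: inkSX.
Qed.

Definition in_shiftS f m : Prop := exists2 m' : 'X_{1..2}, inSm m' & m = (m' + f)%MM.

Lemma inkS_decomp2 (f1 f2 : 'X_{1..2}) p :
  {in msupp p, forall m, in_shiftS f1 m \/ in_shiftS f2 m} ->
  exists c1 c2, [/\ inkS c1, inkS c2 & p = c1 * 'X_[f1] + c2 * 'X_[f2]].
Proof.
move: p; apply: (@msupp_ind 2 k (fun m => in_shiftS f1 m \/ in_shiftS f2 m)).
  by exists 0, 0; split; rewrite ?mul0r ?addr0 //; apply: inkS0.
move=> c m q [] [m' Sm' ->] _ [c1 [c2 [S1 S2 ->]]].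
- exists (c *: 'X_[m'] + c1), c2; split=> //; first by apply/inkSD/S1/inkSZ/inkSX.
  by rewrite mpolyXD -!mul_mpolyC; ring.
- exists c1, (c *: 'X_[m'] + c2); split=> //; first by apply/inkSD/S2/inkSZ/inkSX.
  by rewrite mpolyXD -!mul_mpolyC; ring.
Qed.

Lemma mpolyX_dvd_inkS c e f : inkS c -> 'X_[e] = c * 'X_[f] -> in_shiftS f e.
Proof.
move=> Sc E; have : e \in msupp (c * 'X_[f]) by rewrite -E msuppX mem_seq1.
by case/msuppMX_mem=> m /Sc Sm ->; exists m.
Qed.

Lemma in_shiftS_mnm2 m x y a b : inS n0 n1 x y -> m tvar = (x + a)%N -> m uvar = (y + b)%N ->
  in_shiftS (mnm2 a b) m.
Proof.
by move=> Sxy Et Eu; exists (mnm2 x y); rewrite ?mnm2_t ?mnm2_u // mnm2D [m]mnm2_eta Et Eu.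
Qed.

Lemma isDerkS_dt a b : (forall x y, inS n0 n1 x.+1 y -> inS n0 n1 (a + x) (b + y)) ->
  isDerkS n0 n1 (vf ('X_[mnm2 a b] : P, 0)).
Proof.
move=> shift; apply: isDerkS_vf => m.
rewrite [in vf _ _](mnm2_eta m) vf_mnm2 mul0r mul0rn addr0 mulX_mnm2.
by case: (m tvar) => [|x] Sm; [rewrite mulr0n; apply: inkS0 | apply/inkSMn/inkSX_mnm2/shift].
Qed.

Lemma isDerkS_du a b : (forall x y, inS n0 n1 x y.+1 -> inS n0 n1 (a + x) (b + y)) ->
  isDerkS n0 n1 (vf (0, 'X_[mnm2 a b] : P)).
Proof.
move=> shift; apply: isDerkS_vf => m.
rewrite [in vf _ _](mnm2_eta m) vf_mnm2 mul0r mul0rn add0r mulX_mnm2.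
by case: (m uvar) => [|y] Sm; [rewrite mulr0n; apply: inkS0 | apply/inkSMn/inkSX_mnm2/shift].
Qed.

Lemma vfZ (f g : P) : vf (f, g) Z = f * 'X_[mnm2 n1.-1 0] *+ n1.
Proof. by rewrite vf_mnm2 mulr0n addr0. Qed.

Lemma vfX (f g : P) : vf (f, g) X = g * 'X_[mnm2 0 n1.-1] *+ n1.
Proof. by rewrite vf_mnm2 mulr0n add0r. Qed.

End SemigroupRing.

Section DerivationModule.
Variables (k : fieldType) (n0 n1 : nat).
Hypotheses (char0 : [pchar k] =i pred0) (n0_gt0 : (0 < n0)%N) (n0_lt_n1 : (n0 < n1)%N)
  (co_n0n1 : coprime n0 n1).
Local Notation P := {mpoly k[2]}.
Local Notation inkS := (@inkS k n0 n1).
Local Notation X := ('X_[mnm2 0 n1] : P).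
Local Notation Y := ('X_[mnm2 n0 (n1 - n0)] : P).
Local Notation Z := ('X_[mnm2 n1 0] : P).
Local Notation A := (n0 * (n1 - 1))%N.
Local Notation B := ((n1 - 1) * (n1 - n0))%N.
Local Notation W := ('X_[mnm2 A B] : P). (* = Y ^+ (n1 - 1) *)

Let n1_gt0 : (0 < n1)%N. Proof. lia. Qed.
Let n1n0_gt0 : (0 < n1 - n0)%N. Proof. lia. Qed.

Lemma mulrnI_char0 j : (0 < j)%N -> injective (fun p : P => p *+ j).
Proof.
move=> j_gt0 p q; rewrite /= -!scaler_nat; apply: scalerI.
by move/pcharf0P: char0 => ->; rewrite -lt0n.
Qed.

Lemma msuppMn_char0 (p : P) j : (0 < j)%N -> msupp (p *+ j) =i msupp p.
Proof.
move=> j_gt0; rewrite -scaler_nat; apply: perm_mem; apply: msuppZ.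
by move/pcharf0P: char0 => ->; rewrite -lt0n.
Qed.

Lemma vf_inj_kS fg fg' : (forall h, inkS h -> vf fg h = vf fg' h) -> fg = fg'.
Proof.
case: fg fg' => f g [f' g'] eq_vf.
have := eq_vf _ (@inkS_Z k n0 n1); rewrite !vfZ.
move=> /(mulrnI_char0 n1_gt0) /(mulIf (mpolyX_neq0 _ _)) ->.
have := eq_vf _ (@inkS_X k n0 n1); rewrite !vfX.
by move=> /(mulrnI_char0 n1_gt0) /(mulIf (mpolyX_neq0 _ _)) ->.
Qed.

Lemma msupp_mulX_relation (p q1 q2 : P) e e1 e2 j j1 j2 : (0 < j)%N ->
  p * 'X_[e] *+ j = q1 * 'X_[e1] *+ j1 - q2 * 'X_[e2] *+ j2 ->
  {in msupp p, forall m, (exists2 m1, m1 \in msupp q1 & (m + e = m1 + e1)%MM) \/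
                         (exists2 m2, m2 \in msupp q2 & (m + e = m2 + e2)%MM)}.
Proof.
move=> j_gt0 E m m_p.
have : (m + e)%MM \in msupp (p * 'X_[e] *+ j).
  by rewrite msuppMn_char0 // (perm_mem (msuppMX _ _)) addmC map_f.
rewrite E => /msuppB_le; rewrite mem_cat -!scaler_nat.
by case/orP=> /msuppZ_le /msuppMX_mem [m' m'_q ->]; [left | right]; exists m'.
Qed.

Lemma der_Z_decomp D : isDerkS n0 n1 D ->
  exists c0 c1, [/\ inkS c0, inkS c1 & D Z = c0 * Z + c1 * W].
Proof.
move=> DerD; have [DkS _ _] := DerD.
have rel : D Z * (X * Y) *+ n0 = D Y * (X * Z) *+ n1 - D X * (Y * Z) *+ (n1 - n0).
  by rewrite (derivation_relation (isDerkS_derivation_on DerD)); ring.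
rewrite !mulX_mnm2 in rel.
apply: inkS_decomp2 => m m_DZ.
have Sm := DkS _ (@inkS_Z k n0 n1) m m_DZ.
have : exists2 z, numSg n0 n1 z & (m tvar + n0 = z + n1)%N.
  case: (msupp_mulX_relation n0_gt0 rel m_DZ) => [[m' m'_D] | [m' m'_D]]
    /(congr1 (fun m : 'X_{1..2} => m tvar)); rewrite !mnmDE !mnm2_t => E.
  - by exists (m' tvar); [exact: numSg_inS_t (DkS _ (@inkS_Y k n0 n1) _ m'_D) | lia].
  - exists (m' tvar + n0)%N; last lia.
    exact/numSg_addl/numSg_inS_t/(DkS _ (@inkS_X k n0 n1) _ m'_D).
case/(inS_split_t n0_gt0 n0_lt_n1 co_n0n1 Sm) => [[x' Sx' Ex] | [x' [y' [Sx'y' Ex Ey]]]].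
- by left; apply: (in_shiftS_mnm2 Sx') => //; rewrite addn0.
- by right; apply: (in_shiftS_mnm2 Sx'y').
Qed.

Lemma der_X_decomp D : isDerkS n0 n1 D ->
  exists c2 c3, [/\ inkS c2, inkS c3 & D X = c2 * X + c3 * W].
Proof.
move=> DerD; have [DkS _ _] := DerD.
have rel : D X * (Y * Z) *+ (n1 - n0) = D Y * (X * Z) *+ n1 - D Z * (X * Y) *+ n0.
  by rewrite (derivation_relation (isDerkS_derivation_on DerD)); ring.
rewrite !mulX_mnm2 in rel.
apply: inkS_decomp2 => m m_DX.
have Sm := DkS _ (@inkS_X k n0 n1) m m_DX.
have : exists2 z, numSg (n1 - n0) n1 z & (m uvar + (n1 - n0) = z + n1)%N.
  case: (msupp_mulX_relation n1n0_gt0 rel m_DX) => [[m' m'_D] | [m' m'_D]]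
    /(congr1 (fun m : 'X_{1..2} => m uvar)); rewrite !mnmDE !mnm2_u => E.
  - by exists (m' uvar); [exact: numSg_inS_u (DkS _ (@inkS_Y k n0 n1) _ m'_D) | lia].
  - exists (m' uvar + (n1 - n0))%N; last lia.
    exact/numSg_addl/numSg_inS_u/(DkS _ (@inkS_Z k n0 n1) _ m'_D).
case/(inS_split_u n0_gt0 n0_lt_n1 co_n0n1 Sm) => [[y' Sy' Ey] | [x' [y' [Sx'y' Ex Ey]]]].
- by left; apply: (in_shiftS_mnm2 Sy') => //; rewrite addn0.
- by right; apply: (in_shiftS_mnm2 Sx'y').
Qed.

Definition der_generators : 'I_4 -> P * P :=
  fam4 ('X_[mnm2 1 0], 0) ('X_[mnm2 (A + 1 - n1) B], 0)
       (0, 'X_[mnm2 0 1]) (0, 'X_[mnm2 A (B + 1 - n1)]).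

Lemma der_generators_isDerkS i : isDerkS n0 n1 (vf (der_generators i)).
Proof.
case: i => [[|[|[|[|//]]]] lt_i4] /=.
- by apply: isDerkS_dt => x y; rewrite add1n add0n.
- by apply: isDerkS_dt => x y; apply: inS_shift_t.
- by apply: isDerkS_du => x y; rewrite add0n add1n.
- by apply: isDerkS_du => x y; apply: inS_shift_u.
Qed.

Lemma der_generators_Z i : vf (der_generators i) Z = nth 0 [:: Z; W; 0; 0] i *+ n1.
Proof.
case: i => [[|[|[|[|//]]]] lt_i4]; rewrite /= vfZ ?mul0r ?mulX_mnm2 //;
  congr (_ *+ _); congr 'X_[mnm2 _ _]; nia.
Qed.

Lemma der_generators_X i : vf (der_generators i) X = nth 0 [:: 0; 0; X; W] i *+ n1.
Proof.
case: i => [[|[|[|[|//]]]] lt_i4]; rewrite /= vfX ?mul0r ?mulX_mnm2 //;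
  congr (_ *+ _); congr 'X_[mnm2 _ _]; nia.
Qed.

Lemma scaleVn_mulrn (p : P) : n1%:R^-1 *: p *+ n1 = p.
Proof.
by rewrite -scaler_nat scalerA mulfV ?scale1r //; move/pcharf0P: char0 => ->; rewrite -lt0n.
Qed.

Lemma der_generators_span D : isDerkS n0 n1 D -> inSpan n0 n1 der_generators predT D.
Proof.
move=> DerD.
have [c0 [c1 [S0 S1 DZ]]] := der_Z_decomp DerD.
have [c2 [c3 [S2 S3 DX]]] := der_X_decomp DerD.
pose c i := n1%:R^-1 *: nth 0 [:: c0; c1; c2; c3] i.
exists c; split=> [i|]; first by apply: inkSZ; case: i => [[|[|[|[|//]]]] lt_i4].
pose D' h := \sum_(i < 4 | predT i) c i * vf (der_generators i) h.
have derD' : derivation_on n0 n1 D'.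
  by split=> *; rewrite /D' !vf_sum; [apply: vf_additive | apply: vf_Leibniz].
have eqZ : D Z = D' Z.
  rewrite /D' (eq_bigr (fun i : 'I_4 => c i * nth 0 [:: Z; W; 0; 0] i *+ n1)) => [|i _]; last first.
    by rewrite der_generators_Z mulrnAr.
  by rewrite !big_ord_recl big_ord0 /= -!scalerAl !scaleVn_mulrn !mulr0 !addr0.
have eqX : D X = D' X.
  rewrite /D' (eq_bigr (fun i : 'I_4 => c i * nth 0 [:: 0; 0; X; W] i *+ n1)) => [|i _]; last first.
    by rewrite der_generators_X mulrnAr.
  by rewrite !big_ord_recl big_ord0 /= -!scalerAl !scaleVn_mulrn !mulr0 !add0r addr0.
have eqY : D Y = D' Y.
  have : D Y * (X * Z) *+ n1 = D' Y * (X * Z) *+ n1.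
    rewrite (derivation_relation (isDerkS_derivation_on DerD)).
    by rewrite (derivation_relation derD') eqX eqZ.
  move/(mulrnI_char0 n1_gt0).
  exact/mulIf/mulf_neq0/mpolyX_neq0/mpolyX_neq0.
exact: derivation_on_eq (isDerkS_derivation_on DerD) derD' eqX eqY eqZ.
Qed.

Lemma der_generators_minimal j :
  ~ inSpan n0 n1 der_generators (fun i => i != j) (vf (der_generators j)).
Proof.
case=> c [Sc span_j].
have /vf_inj_kS : forall h, inkS h -> vf (der_generators j) h =
    vf (\sum_(i < 4 | i != j) c i * (der_generators i).1,
        \sum_(i < 4 | i != j) c i * (der_generators i).2) h.
  by move=> h Sh; rewrite span_j // vf_sum.
have A_gt0 : (0 < A)%N by rewrite muln_gt0; lia.
have B_gt0 : (0 < B)%N by rewrite muln_gt0; lia.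
have lt_n1 : (n1 - 1 < n1)%N by lia.
clear span_j; case: j => [[|[|[|[|//]]]] lt_j4] [];
  rewrite !big_mkcond !big_ord_recl big_ord0 /= ?mulr0 ?mul0r ?addr0 ?add0r => E1;
  rewrite !big_mkcond !big_ord_recl big_ord0 /= ?mulr0 ?mul0r ?addr0 ?add0r => E2.
- have [m _ /(congr1 (fun m : 'X_{1..2} => m uvar))] := mpolyX_dvd_inkS (Sc _) E1.
  by rewrite mnmDE !mnm2_u; lia.
- have [m Sm /(congr1 (fun m : 'X_{1..2} => m tvar))] := mpolyX_dvd_inkS (Sc _) E1.
  rewrite mnmDE !mnm2_t => Et.
  by apply: (numSg_shift_apery co_n0n1 lt_n1 (numSg_inS_t Sm)); rewrite mulnC; lia.
- have [m _ /(congr1 (fun m : 'X_{1..2} => m tvar))] := mpolyX_dvd_inkS (Sc _) E2.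
  by rewrite mnmDE !mnm2_t; lia.
- have [m Sm /(congr1 (fun m : 'X_{1..2} => m uvar))] := mpolyX_dvd_inkS (Sc _) E2.
  rewrite mnmDE !mnm2_u => Eu.
  have co_n1n0 : coprime (n1 - n0) n1 by rewrite coprime_subl // ltnW.
  by apply: (numSg_shift_apery co_n1n0 lt_n1 (numSg_inS_u Sm)); lia.
Qed.

Lemma der_generators_minGenDer : minGenDer n0 n1 der_generators.
Proof.
split; [exact: der_generators_isDerkS | exact: der_generators_span |].
exact: der_generators_minimal.
Qed.

End DerivationModule.

Lemma numSg_full_eq1 a b : (1 < b)%N -> (forall x, numSg a b x) -> a = 1%N.
Proof.
move=> b_gt1 /(_ 1%N) [i [[|j] E]]; last nia.
by move/esym/eqP: E; rewrite mul0n addn0 muln_eq1 => /andP[_ /eqP].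
Qed.

Unset Implicit Arguments.

Theorem proposition3p1 (k : fieldType) (n0 n1 : nat) :
  [pchar k] =i pred0 -> (0 < n0)%N -> (n0 < n1)%N -> coprime n0 n1 ->
  let S1N := forall x : nat, numSg n0 n1 x in
  let S2N := forall x : nat, numSg (n1 - n0) n1 x in
  let dt := fun f : {mpoly k[2]} => (f, 0 : {mpoly k[2]}) in
  let du := fun g : {mpoly k[2]} => (0 : {mpoly k[2]}, g) in
  [/\ (~ S1N -> ~ S2N ->
         minGenDer n0 n1 (fam4
           (dt (mono k 1 0))
           (dt (mono k ((n0 * (n1 - 1) + 1) - n1) ((n1 - 1) * (n1 - n0))))
           (du (mono k 0 1))
           (du (mono k (n0 * (n1 - 1)) (((n1 - 1) * (n1 - n0) + 1) - n1))))),
      (S1N -> ~ S2N ->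
         minGenDer n0 n1 (fam4
           (dt (mono k 1 0))
           (dt (mono k 0 (1 + (n1 - 2) * n1)))
           (du (mono k 0 1))
           (du (mono k (n1 - 1) ((n1 - 1) * (n1 - 2)))))),
      (~ S1N -> S2N ->
         minGenDer n0 n1 (fam4
           (dt (mono k 1 0))
           (dt (mono k ((n0 * (n1 - 1) + 1) - n1) (n1 - 1)))
           (du (mono k 0 1))
           (du (mono k (n0 * (n1 - 1)) 0))))
    & (S1N -> S2N ->
         minGenDer n0 n1 (fam4
           (dt (mono k 1 0))
           (dt (mono k 0 1))
           (du (mono k 0 1))
           (du (mono k 1 0)))) ].
Proof.
move=> char0 n0_gt0 n0_lt_n1 co_n0n1 S1N S2N dt du.
have := der_generators_minGenDer char0 n0_gt0 n0_lt_n1 co_n0n1.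
rewrite /der_generators /dt /du !mono_mnm2 => gens.
have n1_gt1 : (1 < n1)%N by lia.
split=> [// | /(numSg_full_eq1 n1_gt1) n0_1 _ | _ /(numSg_full_eq1 n1_gt1) n1n0_1 | ].
- subst n0; rewrite mul1n (_ : (n1 - 1 + 1 - n1 = 0)%N) in gens; last lia.
  rewrite (_ : (1 + (n1 - 2) * n1 = (n1 - 1) * (n1 - 1))%N); last nia.
  by rewrite (_ : ((n1 - 1) * (n1 - 2) = (n1 - 1) * (n1 - 1) + 1 - n1)%N); last nia.
- by rewrite n1n0_1 muln1 (_ : (n1 - 1 + 1 - n1 = 0)%N) in gens; last lia.
- move=> /(numSg_full_eq1 n1_gt1) n0_1 /(numSg_full_eq1 n1_gt1) n1n0_1.
  have n1_2 : n1 = 2%N by lia.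
  by subst n0 n1.
Qed.
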